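(* Consider the fully discrete implicit variable-step BDF2 scheme described in the context and let $\{u^n\}$ be its solution. Suppose the time-step ratios satisfy $r_k\le r_s$ for $2\le k\le N$ and \[ \tau_n<4\delta\min\Big\{R_L(r_n,r_{n+1}),\ \frac{2+r_2}{1+r_2}\Big\},\qquad 1\le n\le N, \] where $R_L(z,s)=\frac{2+4z-z^{3/2}}{1+z}-\frac{s^{3/2}}{1+s}$ (with $r_1:=0$). Then there is a constant $C_0$, independent of the spatial step $h$ and the time steps $\tau_n$, such that \[ \max\{\|\nabla_hu^n\|,\ \|\nabla_hu^n\|_{l^4},\ \|\Delta_hu^n\|\}\le C_0 . \]
   Context: Let $L>0$, $\Omega=(0,L)^2$, $M$ a positive integer, $h=L/M$, $x_i=ih$, $y_j=jh$, $\Omega_h=\{(x_i,y_j):1\le i,j\le M\}$, $\bar\Omega_h=\{(x_i,y_j):0\le i,j\le M\}$, and $\mathbb{V}_h$ the space of grid functions on $\bar\Omega_h$ that are $L$-periodic in each direction. For $v\in\mathbb{V}_h$: $\delta_x v_{i+1/2,j}=(v_{i+1,j}-v_{ij})/h$, $\Delta_x v_{ij}=(v_{i+1,j}-v_{i-1,j})/(2h)$, $\delta_x^2 v_{ij}=(\delta_xv_{i+1/2,j}-\delta_xv_{i-1/2,j})/h$, and analogously in $y$; $\Delta_h=\delta_x^2+\delta_y^2$, $\nabla_h v_{ij}=(\Delta_x v_{ij},\Delta_y v_{ij})^T$, and for a vector grid function $\mathbf{g}=(g_1,g_2)$, $\nabla_h\cdot \mathbf g=\Delta_x g_1+\Delta_y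 g_2$. Inner product $\langle v,w\rangle=h^2\sum_{\mathrm{x}_h\in\Omega_h}v_hw_h$, $\|v\|=\sqrt{\langle v,v\rangle}$, $\|v\|_{l^q}=(h^2\sum_{\mathrm{x}_h\in\Omega_h}|v_h|^q)^{1/q}$; for vector grid functions the pointwise Euclidean norm is used inside. Let $f(\mathbf{v})=(|\mathbf v|^2-1)\mathbf v$ and $\delta>0$. Time levels $0=t_0<t_1<\dots<t_N=T$, $\tau_n=t_n-t_{n-1}$, $r_n=\tau_n/\tau_{n-1}$ ($2\le n\le N$); $r_{N+1}\in(0,r_s]$ is an auxiliary ratio. $\nabla_\tau v^n=v^n-v^{n-1}$. BDF2 kernels: $b_0^{(1)}=2/\tau_1$, and for $n\ge2$, $b_0^{(n)}=\frac{1+2r_n}{\tau_n(1+r_n)}$, $b_1^{(n)}=-\frac{r_n^2}{\tau_n(1+r_n)}$, $b_j^{(n)}=0$ for $j\ge2$; $D_2v^n=\sum_{k=1}^n b_{n-k}^{(n)}\nabla_\tau v^k$. The scheme is: $D_2u_h^n+\delta\Delta_h^2u_h^n-\nabla_h\cdot f(\nabla_hu_h^n)=0$ for $\mathrm{x}_h\in\Omega_h$, $1\le n\le N$, with $u_h^0=\varphi_0(\mathrm{x}_h)-\frac{\tau_1}{2}\varphi_1(\mathrm{x}_h)$, $\varphi_1=\nabla\cdot f(\nabla\varphi_0)-\delta\Delta^2\varphi_0$ for given periodic smooth data $\varphi_0\in H^4(\Omega)$. $r_s$ is a fixed constant with $0<r_s<4.864$. *)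

From Stdlib Require Import Reals Lra Lia ZArith.
From Coquelicot Require Import Coquelicot.
Open Scope R_scope.

Definition pdx (f : R -> R -> R) : R -> R -> R := fun x y => Derive (fun t => f t y) x.
Definition pdy (f : R -> R -> R) : R -> R -> R := fun x y => Derive (fun t => f x t) y.

(* iterated partial derivative: true = d/dx, false = d/dy (applied right to left) *)
Fixpoint pderiv (w : list bool) (f : R -> R -> R) : R -> R -> R :=
  match w with
  | nil => f
  | cons b w' => (if b then pdx else pdy) (pderiv w' f)
  end.

Definition smooth2 (f : R -> R -> R) : Prop :=
  forall (w : list bool) (x y : R),
    ex_derive (fun t => pderiv w f t y) x /\
    ex_derive (fun t => pderiv w f x t) y /\
    continuous (fun p : R * R => pderiv w f (fst p) (snd p)) (x, y).

Definition periodic2 (L : R) (f : R -> R -> R) : Prop :=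
  forall x y, f (x + L) y = f x y /\ f x (y + L) = f x y.

Definition cLap (f : R -> R -> R) : R -> R -> R :=
  fun x y => pdx (pdx f) x y + pdy (pdy f) x y.

Definition phi1 (delta : R) (phi0 : R -> R -> R) : R -> R -> R :=
  fun x y =>
    pdx (fun a b => (pdx phi0 a b ^ 2 + pdy phi0 a b ^ 2 - 1) * pdx phi0 a b) x y
  + pdy (fun a b => (pdx phi0 a b ^ 2 + pdy phi0 a b ^ 2 - 1) * pdy phi0 a b) x y
  - delta * cLap (cLap phi0) x y.

Definition grid := Z -> Z -> R.

Definition gperiodic (M : nat) (v : grid) : Prop :=
  forall i j : Z, v (i + Z.of_nat M)%Z j = v i j /\ v i (j + Z.of_nat M)%Z = v i j.

Definition Dcx (h : R) (v : grid) : grid :=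
  fun i j => (v (i + 1)%Z j - v (i - 1)%Z j) / (2 * h).
Definition Dcy (h : R) (v : grid) : grid :=
  fun i j => (v i (j + 1)%Z - v i (j - 1)%Z) / (2 * h).

Definition d2x (h : R) (v : grid) : grid :=
  fun i j => ((v (i + 1)%Z j - v i j) / h - (v i j - v (i - 1)%Z j) / h) / h.
Definition d2y (h : R) (v : grid) : grid :=
  fun i j => ((v i (j + 1)%Z - v i j) / h - (v i j - v i (j - 1)%Z) / h) / h.
Definition Lap_h (h : R) (v : grid) : grid := fun i j => d2x h v i j + d2y h v i j.

Definition divf_h (h : R) (v : grid) : grid :=
  let g1 := fun i j => (Dcx h v i j ^ 2 + Dcy h v i j ^ 2 - 1) * Dcx h v i j in
  let g2 := fun i j => (Dcx h v i j ^ 2 + Dcy h v i j ^ 2 - 1) * Dcy h v i j in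
  fun i j => Dcx h g1 i j + Dcy h g2 i j.

Definition gsum (M : nat) (h : R) (F : grid) : R :=
  h ^ 2 * sum_f_R0 (fun a => sum_f_R0 (fun b =>
            F (Z.of_nat a + 1)%Z (Z.of_nat b + 1)%Z) (M - 1)) (M - 1).

Definition norm_grad (M : nat) (h : R) (v : grid) : R :=
  sqrt (gsum M h (fun i j => Dcx h v i j ^ 2 + Dcy h v i j ^ 2)).
Definition norm4_grad (M : nat) (h : R) (v : grid) : R :=
  sqrt (sqrt (gsum M h (fun i j => (Dcx h v i j ^ 2 + Dcy h v i j ^ 2) ^ 2))).
Definition norm_lap (M : nat) (h : R) (v : grid) : R :=
  sqrt (gsum M h (fun i j => Lap_h h v i j ^ 2)).

(* r_1 := 0, r_n = tau_n / tau_{n-1} for 2 <= n <= N, r_{N+1} := rN1 (auxiliary) *)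
Definition ratio (tau : nat -> R) (N : nat) (rN1 : R) (n : nat) : R :=
  if Nat.leb n 1 then 0
  else if Nat.eqb n (S N) then rN1
  else tau n / tau (n - 1)%nat.

(* z^{3/2} for z >= 0 *)
Definition pow32 (z : R) : R := z * sqrt z.

Definition R_L (z s : R) : R :=
  (2 + 4 * z - pow32 z) / (1 + z) - pow32 s / (1 + s).

Definition D2 (tau : nat -> R) (u : nat -> grid) (n : nat) : grid :=
  fun i j =>
    match n with
    | O => 0
    | S O => 2 / tau 1%nat * (u 1%nat i j - u 0%nat i j)
    | S (S m as k) =>
        let rn := tau n / tau k in
        (1 + 2 * rn) / (tau n * (1 + rn)) * (u n i j - u k i j)
        - rn ^ 2 / (tau n * (1 + rn)) * (u k i j - u m i j)
    end.

From Stdlib Require Import Reals ZArith Lra Lia List.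
From Stdlib Require Import FunctionalExtensionality Classical ClassicalEpsilon.
From Coquelicot Require Import Coquelicot.
Open Scope R_scope.

(* Energy method.  For the double well W(p) = (|p|^2 - 1)^2 / 4 the discrete energy
   E(v) = delta/2 ||Delta_h v||^2 + <W(nabla_h v), 1> controls all three norms.  Testing the
   scheme at step n with w = u^n - u^(n-1), summing by parts on the periodic grid and using
   W(p) - W(q) <= W'(p).(p - q) + |p - q|^2 / 2 and ||nabla_h w||^2 <= -<w, Delta_h w> gives
     E(u^n) - E(u^(n-1)) + <D_2 u^n, w> + delta/2 ||Delta_h w||^2 + <w, Delta_h w>/2 <= 0.
   Pointwise, the step restriction tau_n < 4 delta R_L(r_n, r_(n+1)) makes the last three
   terms dominate c(r_(n+1))/tau_n |w^n|^2 - c(r_n)/tau_(n-1) |w^(n-1)|^2, where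
   c(r) = r^(3/2) / (2 (1 + r)), so E(u^n) + c(r_(n+1))/tau_n ||w^n||^2 does not increase.
   Finally E(u^0) is bounded independently of h and of the steps: tau_1 <= 8 delta, and the
   difference quotients of the smooth periodic data are bounded by its derivatives, which are
   bounded by compactness and periodicity. *)

(** * Smooth periodic functions of two variables *)

Definition regular2 (F : R -> R -> R) : Prop :=
  forall x y,
    ex_derive (fun t => F t y) x /\ ex_derive (fun t => F x t) y /\
    continuous (fun p : R * R => F (fst p) (snd p)) (x, y).

Definition pd (b : bool) : (R -> R -> R) -> R -> R -> R := if b then pdx else pdy.

Lemma pderiv_app w1 w2 F : pderiv (w1 ++ w2) F = pderiv w1 (pderiv w2 F).
Proof. induction w1 as [|b w IH]; simpl; [reflexivity | now rewrite IH]. Qed.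

Lemma regular2_plus F G :
  regular2 F -> regular2 G -> regular2 (fun x y => F x y + G x y).
Proof.
  intros HF HG x y.
  destruct (HF x y) as (Fx & Fy & Fc), (HG x y) as (Gx & Gy & Gc).
  split; [|split].
  - exact (ex_derive_plus _ _ _ Fx Gx).
  - exact (ex_derive_plus _ _ _ Fy Gy).
  - exact (continuous_plus _ _ _ Fc Gc).
Qed.

Lemma regular2_mult F G :
  regular2 F -> regular2 G -> regular2 (fun x y => F x y * G x y).
Proof.
  intros HF HG x y.
  destruct (HF x y) as (Fx & Fy & Fc), (HG x y) as (Gx & Gy & Gc).
  split; [|split].
  - exact (ex_derive_mult _ _ _ Fx Gx).
  - exact (ex_derive_mult _ _ _ Fy Gy).
  - exact (@continuous_mult _ R_AbsRing _ _ _ Fc Gc).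
Qed.

Lemma regular2_const c : regular2 (fun _ _ => c).
Proof.
  intros x y; split; [|split].
  - apply (@ex_derive_const R_AbsRing R_NormedModule).
  - apply (@ex_derive_const R_AbsRing R_NormedModule).
  - apply continuous_const.
Qed.

Lemma pd_plus b F G : regular2 F -> regular2 G ->
  pd b (fun x y => F x y + G x y) = (fun x y => pd b F x y + pd b G x y).
Proof.
  intros HF HG; apply functional_extensionality; intro x;
    apply functional_extensionality; intro y.
  destruct (HF x y) as (? & ? & _), (HG x y) as (? & ? & _).
  destruct b; unfold pd, pdx, pdy; apply (Derive_plus (fun t => _) (fun t => _)); assumption.
Qed.

Lemma pd_mult b F G : regular2 F -> regular2 G ->
  pd b (fun x y => F x y * G x y)
  = (fun x y => pd b F x y * G x y + F x y * pd b G x y).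
Proof.
  intros HF HG; apply functional_extensionality; intro x;
    apply functional_extensionality; intro y.
  destruct (HF x y) as (? & ? & _), (HG x y) as (? & ? & _).
  destruct b; unfold pd, pdx, pdy; apply (Derive_mult (fun t => _) (fun t => _)); assumption.
Qed.

Lemma pd_const b c : pd b (fun _ _ => c) = (fun _ _ => 0).
Proof.
  apply functional_extensionality; intro x; apply functional_extensionality; intro y.
  destruct b; unfold pd, pdx, pdy; apply Derive_const.
Qed.

(* Graded form of [smooth2]; closure under products is proved by induction on the order. *)
Fixpoint smooth2_upto (n : nat) (F : R -> R -> R) : Prop :=
  regular2 F /\
  match n with O => True | S m => forall b, smooth2_upto m (pd b F) end.

Lemma smooth2_upto_weaken n F : smooth2_upto (S n) F -> smooth2_upto n F.
Proof.
  revert F; induction n as [|n IH]; intros F [HF HdF]; split; auto.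
Qed.

Lemma smooth2_upto_const n c : smooth2_upto n (fun _ _ => c).
Proof.
  revert c; induction n as [|n IH]; intros c; split; auto using regular2_const.
  intros b; rewrite pd_const; apply IH.
Qed.

Lemma smooth2_upto_plus n F G :
  smooth2_upto n F -> smooth2_upto n G -> smooth2_upto n (fun x y => F x y + G x y).
Proof.
  revert F G; induction n as [|n IH]; intros F G [HF HdF] [HG HdG];
    split; auto using regular2_plus.
  intros b; rewrite pd_plus by assumption; apply IH; auto.
Qed.

Lemma smooth2_upto_mult n F G :
  smooth2_upto n F -> smooth2_upto n G -> smooth2_upto n (fun x y => F x y * G x y).
Proof.
  revert F G; induction n as [|n IH]; intros F G SF SG;
    pose proof SF as [HF HdF]; pose proof SG as [HG HdG];
    split; auto using regular2_mult.
  intros b; rewrite pd_mult by assumption.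
  apply smooth2_upto_plus; apply IH; auto using smooth2_upto_weaken.
Qed.

Lemma smooth2_upto_pderiv n F w :
  smooth2_upto n F -> (length w <= n)%nat -> regular2 (pderiv w F).
Proof.
  revert F w; induction n as [|n IH]; intros F w SF Hw.
  - destruct w; [exact (proj1 SF) | simpl in Hw; lia].
  - destruct w as [|b w'] using rev_ind; [exact (proj1 SF)|].
    rewrite length_app in Hw; simpl in Hw.
    rewrite pderiv_app; apply IH; [apply (proj2 SF) | lia].
Qed.

Lemma smooth2_iff_upto F : smooth2 F <-> forall n, smooth2_upto n F.
Proof.
  split.
  - intros SF n; revert F SF; induction n as [|n IH]; intros F SF;
      split; try exact (SF nil); auto.
    intros b; apply IH; intros w.
    change (regular2 (pderiv w (pderiv (b :: nil) F))).
    rewrite <- pderiv_app; exact (SF _).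
  - intros SF w; exact (smooth2_upto_pderiv (length w) F w (SF _) (le_n _)).
Qed.

Lemma smooth2_regular2 F : smooth2 F -> regular2 F.
Proof. intros SF; exact (SF nil). Qed.

Lemma smooth2_const c : smooth2 (fun _ _ => c).
Proof. apply smooth2_iff_upto; intros; apply smooth2_upto_const. Qed.

Lemma smooth2_plus F G : smooth2 F -> smooth2 G -> smooth2 (fun x y => F x y + G x y).
Proof. rewrite !smooth2_iff_upto; intros; apply smooth2_upto_plus; auto. Qed.

Lemma smooth2_mult F G : smooth2 F -> smooth2 G -> smooth2 (fun x y => F x y * G x y).
Proof. rewrite !smooth2_iff_upto; intros; apply smooth2_upto_mult; auto. Qed.

Lemma smooth2_pd b F : smooth2 F -> smooth2 (pd b F).
Proof. rewrite !smooth2_iff_upto; intros SF n; exact (proj2 (SF (S n)) b). Qed.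

Lemma smooth2_ext F G : smooth2 F -> (forall x y, F x y = G x y) -> smooth2 G.
Proof.
  intros SF E; replace G with F; [exact SF|].
  apply functional_extensionality; intro x; apply functional_extensionality; intro y; apply E.
Qed.

Lemma smooth2_lincomb a F G :
  smooth2 F -> smooth2 G -> smooth2 (fun x y => F x y + a * G x y).
Proof. intros; apply smooth2_plus, smooth2_mult; auto using smooth2_const. Qed.

Lemma smooth2_phi1 delta phi0 : smooth2 phi0 -> smooth2 (phi1 delta phi0).
Proof.
  intros S0.
  assert (SX : smooth2 (pdx phi0)) by exact (smooth2_pd true phi0 S0).
  assert (SY : smooth2 (pdy phi0)) by exact (smooth2_pd false phi0 S0).
  assert (SW : smooth2 (fun a b => pdx phi0 a b ^ 2 + pdy phi0 a b ^ 2 - 1)).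
  { apply (smooth2_ext (fun a b => pdx phi0 a b * pdx phi0 a b
                                  + pdy phi0 a b * pdy phi0 a b + (-1) * 1)).
    - apply smooth2_lincomb; [apply smooth2_plus; apply smooth2_mult | apply smooth2_const];
        assumption.
    - intros; ring. }
  assert (SL : forall F, smooth2 F -> smooth2 (cLap F)).
  { intros F SF; apply smooth2_plus;
      [apply (smooth2_pd true), (smooth2_pd true) | apply (smooth2_pd false), (smooth2_pd false)];
      exact SF. }
  apply (smooth2_ext (fun x y =>
      pd true (fun a b => (pdx phi0 a b ^ 2 + pdy phi0 a b ^ 2 - 1) * pdx phi0 a b) x y
    + pd false (fun a b => (pdx phi0 a b ^ 2 + pdy phi0 a b ^ 2 - 1) * pdy phi0 a b) x y
    + (- delta) * cLap (cLap phi0) x y)).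
  - apply smooth2_lincomb; [apply smooth2_plus; apply smooth2_pd, smooth2_mult |
      apply SL, SL]; assumption.
  - intros; unfold phi1; simpl; ring.
Qed.

(* [Derive] is a limit of difference quotients, so no differentiability is needed here. *)
Lemma Derive_translate (f : R -> R) x a :
  Derive (fun t => f (t + a)) x = Derive f (x + a).
Proof.
  unfold Derive; f_equal; apply Lim_ext; intros h.
  now replace (x + h + a) with (x + a + h) by ring.
Qed.

Section Periodic.

Variable L : R.
Hypothesis HL : 0 < L.

Lemma periodic2_pd b F : periodic2 L F -> periodic2 L (pd b F).
Proof.
  intros P x y; destruct b; unfold pd, pdx, pdy; split.
  - rewrite <- Derive_translate; apply Derive_ext; intros t; apply P.
  - apply Derive_ext; intros t; apply P.
  - apply Derive_ext; intros t; apply P.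
  - rewrite <- Derive_translate; apply Derive_ext; intros t; apply P.
Qed.

Lemma periodic2_op2 (f : R -> R -> R) F G :
  periodic2 L F -> periodic2 L G -> periodic2 L (fun x y => f (F x y) (G x y)).
Proof.
  intros PF PG x y; destruct (PF x y) as [-> ->], (PG x y) as [-> ->]; split; reflexivity.
Qed.

Lemma periodic2_phi1 delta phi0 : periodic2 L phi0 -> periodic2 L (phi1 delta phi0).
Proof.
  intros P0.
  assert (PX : periodic2 L (pdx phi0)) by exact (periodic2_pd true phi0 P0).
  assert (PY : periodic2 L (pdy phi0)) by exact (periodic2_pd false phi0 P0).
  assert (PW : periodic2 L (fun a b => pdx phi0 a b ^ 2 + pdy phi0 a b ^ 2 - 1))
    by exact (periodic2_op2 (fun p q => p ^ 2 + q ^ 2 - 1) _ _ PX PY).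
  assert (PL : forall F, periodic2 L F -> periodic2 L (cLap F)).
  { intros F PF; apply (periodic2_op2 Rplus);
      [apply (periodic2_pd true), (periodic2_pd true) |
       apply (periodic2_pd false), (periodic2_pd false)]; exact PF. }
  apply (periodic2_op2 (fun p q => p - delta * q)); [apply (periodic2_op2 Rplus)|].
  - apply (periodic2_pd true), (periodic2_op2 Rmult); assumption.
  - apply (periodic2_pd false), (periodic2_op2 Rmult); assumption.
  - apply PL, PL, P0.
Qed.

Lemma continuous2_bounded_on_rectangle (F : R -> R -> R) a b c d :
  (forall x y, continuous (fun p : R * R => F (fst p) (snd p)) (x, y)) ->
  exists K, forall x y, a <= x <= b -> c <= y <= d -> Rabs (F x y) <= K.
Proof.
  intros HF.
  assert (Hloc : forall x y, exists e : posreal, forall u v,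
             Rabs (u - x) < e -> Rabs (v - y) < e -> Rabs (F u v - F x y) < 1).
  { intros x y; specialize (HF x y); apply continuity_2d_pt_filterlim in HF.
    exact (HF (mkposreal 1 Rlt_0_1)). }
  set (radius := fun t : Compactness.Tn 2 R =>
         proj1_sig (constructive_indefinite_description _ (Hloc (fst t) (fst (snd t))))).
  assert (Hradius : forall t u v, Rabs (u - fst t) < radius t -> Rabs (v - fst (snd t)) < radius t ->
                      Rabs (F u v - F (fst t) (fst (snd t))) < 1).
  { intros t; unfold radius; destruct (constructive_indefinite_description _ _) as [e He]; exact He. }
  apply NNPP; intro Hn.
  apply (compactness_list 2 (a, (c, tt)) (b, (d, tt)) radius); intros [l Hl]; apply Hn.
  set (bound := fun t : Compactness.Tn 2 R => Rabs (F (fst t) (fst (snd t))) + 1).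
  exists (fold_right (fun t acc => Rmax (bound t) acc) 0 l).
  assert (Hin : forall t, In t l -> bound t <= fold_right (fun t acc => Rmax (bound t) acc) 0 l).
  { clear; induction l as [|t0 l IH]; simpl; [tauto|]; intros t [<- | Ht].
    - apply Rmax_l.
    - eapply Rle_trans; [apply IH, Ht | apply Rmax_r]. }
  intros x y Hx Hy.
  destruct (Hl (x, (y, tt))) as [t [Ht [_ Hclose]]]; [simpl; tauto|].
  destruct t as [t1 [t2 []]]; destruct Hclose as [c1 [c2 _]].
  specialize (Hradius (t1, (t2, tt)) x y c1 c2); specialize (Hin _ Ht).
  unfold bound in Hin |- *; simpl in Hradius, Hin |- *.
  pose proof (Rabs_triang_inv (F x y) (F t1 t2)); lra.
Qed.

Lemma periodic_representative (g : R -> R) :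
  (forall t, g (t + L) = g t) -> forall x, exists x', 0 <= x' <= L /\ g x = g x'.
Proof.
  intros P x.
  assert (Pn : forall n t, g (t + INR n * L) = g t).
  { induction n as [|n IH]; intros t.
    - simpl; f_equal; ring.
    - rewrite S_INR; replace (t + (INR n + 1) * L) with (t + INR n * L + L) by ring.
      rewrite P; apply IH. }
  destruct (archimed (x / L)) as [H1 H2].
  set (k := (up (x / L) - 1)%Z).
  assert (Hk : IZR k = IZR (up (x / L)) - 1) by (unfold k; rewrite minus_IZR; reflexivity).
  assert (Ex : x = x / L * L) by (field; lra).
  exists (x - IZR k * L); split.
  - rewrite Hk; split; rewrite Ex at 1; set (q := x / L) in *; nra.
  - destruct (Z_le_gt_dec 0 k) as [Hk0 | Hk0].
    + rewrite <- (Pn (Z.to_nat k) (x - IZR k * L)), INR_IZR_INZ, Z2Nat.id by exact Hk0.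
      f_equal; ring.
    + rewrite <- (Pn (Z.to_nat (- k)) x), INR_IZR_INZ, Z2Nat.id, opp_IZR by lia.
      f_equal; ring.
Qed.

Lemma periodic2_bounded F :
  (forall x y, continuous (fun p : R * R => F (fst p) (snd p)) (x, y)) -> periodic2 L F ->
  exists K, forall x y, Rabs (F x y) <= K.
Proof.
  intros HF P.
  destruct (continuous2_bounded_on_rectangle F 0 L 0 L HF) as [K HK].
  exists K; intros x y.
  destruct (periodic_representative (fun t => F t y) (fun t => proj1 (P t y)) x) as [x' [Hx' ->]].
  destruct (periodic_representative (fun t => F x' t) (fun t => proj2 (P x' t)) y) as [y' [Hy' ->]].
  apply HK; assumption.
Qed.

Lemma smooth2_periodic2_derivatives_bounded F : smooth2 F -> periodic2 L F ->
  exists K, 0 <= K /\ forall x y,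
    Rabs (pdx F x y) <= K /\ Rabs (pdy F x y) <= K /\
    Rabs (pdx (pdx F) x y) <= K /\ Rabs (pdy (pdy F) x y) <= K.
Proof.
  intros SF PF.
  assert (Hb : forall w, exists K, forall x y, Rabs (pderiv w F x y) <= K).
  { intros w; apply periodic2_bounded; [apply SF|].
    induction w as [|b w IH]; [exact PF | exact (periodic2_pd b _ IH)]. }
  destruct (Hb (true :: nil)) as [K1 H1], (Hb (false :: nil)) as [K2 H2],
    (Hb (true :: true :: nil)) as [K3 H3], (Hb (false :: false :: nil)) as [K4 H4].
  exists (Rmax (Rmax K1 K2) (Rmax K3 K4)); split.
  - specialize (H1 0 0); pose proof (Rabs_pos (pderiv (true :: nil) F 0 0)).
    unfold Rmax; repeat destruct Rle_dec; lra.
  - intros x y; specialize (H1 x y); specialize (H2 x y); specialize (H3 x y);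
      specialize (H4 x y); simpl in H1, H2, H3, H4.
    unfold Rmax; repeat destruct Rle_dec; repeat split; lra.
Qed.

End Periodic.

Lemma Rabs_div_le a c K : 0 < c -> Rabs a <= c * K -> Rabs (a / c) <= K.
Proof.
  intros Hc Ha; unfold Rdiv; rewrite Rabs_mult, Rabs_inv, (Rabs_pos_eq c) by lra.
  apply (Rmult_le_reg_r c); [exact Hc|]; rewrite Rmult_assoc, Rinv_l by lra; lra.
Qed.

Lemma mvt_abs_le (f f' : R -> R) K a b : a < b ->
  (forall t, is_derive f t (f' t)) -> (forall t, Rabs (f' t) <= K) ->
  Rabs (f b - f a) <= K * (b - a).
Proof.
  intros Hab Hd HK.
  destruct (MVT_cor2 f f' a b Hab) as [c [-> _]].
  - intros c _; apply is_derive_Reals, Hd.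
  - rewrite Rabs_mult, (Rabs_pos_eq (b - a)) by lra.
    apply Rmult_le_compat_r; [lra | apply HK].
Qed.

Lemma second_difference_abs_le (f f' f'' : R -> R) K x h : 0 < h ->
  (forall t, is_derive f t (f' t)) -> (forall t, is_derive f' t (f'' t)) ->
  (forall t, Rabs (f'' t) <= K) ->
  Rabs (f (x + h) - 2 * f x + f (x - h)) <= 2 * h ^ 2 * K.
Proof.
  intros Hh D1 D2 HK.
  destruct (MVT_cor2 f f' x (x + h)) as [c1 [E1 C1]];
    [lra | intros c _; apply is_derive_Reals, D1 |].
  destruct (MVT_cor2 f f' (x - h) x) as [c2 [E2 C2]];
    [lra | intros c _; apply is_derive_Reals, D1 |].
  replace (f (x + h) - 2 * f x + f (x - h)) with (h * (f' c1 - f' c2))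
    by (replace (x + h - x) with h in E1 by ring;
        replace (x - (x - h)) with h in E2 by ring; lra).
  assert (K0 : 0 <= K) by (specialize (HK x); pose proof (Rabs_pos (f'' x)); lra).
  assert (Hc : Rabs (f' c1 - f' c2) <= K * (c1 - c2)) by (apply (mvt_abs_le f' f''); auto; lra).
  rewrite Rabs_mult, Rabs_pos_eq by lra.
  assert (K * (c1 - c2) <= K * (2 * h)) by (apply Rmult_le_compat_l; lra).
  replace (2 * h ^ 2 * K) with (h * (K * (2 * h))) by ring.
  apply Rmult_le_compat_l; lra.
Qed.


Lemma difference_quotients_bounded F K :
  regular2 F -> regular2 (pdx F) -> regular2 (pdy F) ->
  (forall x y, Rabs (pdx F x y) <= K /\ Rabs (pdy F x y) <= K /\
               Rabs (pdx (pdx F) x y) <= K /\ Rabs (pdy (pdy F) x y) <= K) ->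
  forall x y h, 0 < h ->
    Rabs (F (x + h) y - F (x - h) y) <= 2 * h * K /\
    Rabs (F x (y + h) - F x (y - h)) <= 2 * h * K /\
    Rabs (F (x + h) y - 2 * F x y + F (x - h) y) <= 2 * h ^ 2 * K /\
    Rabs (F x (y + h) - 2 * F x y + F x (y - h)) <= 2 * h ^ 2 * K.
Proof.
  intros D0 DX DY HK x y h Hh.
  assert (Fx : forall b t, is_derive (fun s => F s b) t (pdx F t b))
    by (intros b t; apply Derive_correct; exact (proj1 (D0 t b))).
  assert (Fy : forall a t, is_derive (fun s => F a s) t (pdy F a t))
    by (intros a t; apply Derive_correct; exact (proj1 (proj2 (D0 a t)))).
  assert (Fxx : forall b t, is_derive (fun s => pdx F s b) t (pdx (pdx F) t b))
    by (intros b t; apply Derive_correct; exact (proj1 (DX t b))).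
  assert (Fyy : forall a t, is_derive (fun s => pdy F a s) t (pdy (pdy F) a t))
    by (intros a t; apply Derive_correct; exact (proj1 (proj2 (DY a t)))).
  split; [|split; [|split]].
  - replace (2 * h * K) with (K * (x + h - (x - h))) by ring.
    apply (mvt_abs_le (fun s => F s y) (fun s => pdx F s y)); [lra | apply Fx |].
    intros t; apply (HK t y).
  - replace (2 * h * K) with (K * (y + h - (y - h))) by ring.
    apply (mvt_abs_le (fun s => F x s) (fun s => pdy F x s)); [lra | apply Fy |].
    intros t; apply (HK x t).
  - apply (second_difference_abs_le (fun s => F s y) (fun s => pdx F s y)
             (fun s => pdx (pdx F) s y)); [lra | apply Fx | apply Fxx |].
    intros t; apply (HK t y).
  - apply (second_difference_abs_le (fun s => F x s) (fun s => pdy F x s)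
             (fun s => pdy (pdy F) x s)); [lra | apply Fy | apply Fyy |].
    intros t; apply (HK x t).
Qed.

Definition sample (h : R) (F : R -> R -> R) : grid := fun i j => F (IZR i * h) (IZR j * h).

Lemma sample_differences_bounded L F : 0 < L -> smooth2 F -> periodic2 L F ->
  exists K, 0 <= K /\ forall h i j, 0 < h ->
    Rabs (Dcx h (sample h F) i j) <= K /\ Rabs (Dcy h (sample h F) i j) <= K /\
    Rabs (Lap_h h (sample h F) i j) <= K.
Proof.
  intros HL SF PF.
  destruct (smooth2_periodic2_derivatives_bounded L HL F SF PF) as [K [K0 HK]].
  exists (4 * K); split; [lra|]; intros h i j Hh.
  destruct (difference_quotients_bounded F K (smooth2_regular2 F SF)
              (smooth2_regular2 _ (smooth2_pd true F SF))
              (smooth2_regular2 _ (smooth2_pd false F SF)) HK (IZR i * h) (IZR j * h) h Hh)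
    as (Bx & By & Bxx & Byy).
  unfold Dcx, Dcy, Lap_h, d2x, d2y, sample.
  rewrite !plus_IZR, !minus_IZR.
  replace ((IZR i + 1) * h) with (IZR i * h + h) by ring.
  replace ((IZR i - 1) * h) with (IZR i * h - h) by ring.
  replace ((IZR j + 1) * h) with (IZR j * h + h) by ring.
  replace ((IZR j - 1) * h) with (IZR j * h - h) by ring.
  set (x := IZR i * h) in *; set (y := IZR j * h) in *.
  assert (HhK : 0 <= h * K) by (apply Rmult_le_pos; lra).
  assert (Hh2 : 0 < h ^ 2) by (apply pow_lt; lra).
  split; [|split]; [apply Rabs_div_le; lra | apply Rabs_div_le; lra |].
  replace (((F (x + h) y - F x y) / h - (F x y - F (x - h) y) / h) / h
           + ((F x (y + h) - F x y) / h - (F x y - F x (y - h)) / h) / h)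
    with ((F (x + h) y - 2 * F x y + F (x - h) y) / h ^ 2
          + (F x (y + h) - 2 * F x y + F x (y - h)) / h ^ 2) by (field; lra).
  eapply Rle_trans; [apply Rabs_triang|].
  assert (Rabs ((F (x + h) y - 2 * F x y + F (x - h) y) / h ^ 2) <= 2 * K)
    by (apply Rabs_div_le; lra).
  assert (Rabs ((F x (y + h) - 2 * F x y + F x (y - h)) / h ^ 2) <= 2 * K)
    by (apply Rabs_div_le; lra).
  lra.
Qed.

(** * Periodic grid functions *)

Section Grid.

Variable M : nat.
Variable h : R.
Hypothesis HM : (1 <= M)%nat.

Lemma gsum_ext F G : (forall i j, F i j = G i j) -> gsum M h F = gsum M h G.
Proof.
  intros E; unfold gsum; f_equal.
  apply sum_eq; intros a _; apply sum_eq; intros b _; apply E.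
Qed.

Lemma gsum_plus F G : gsum M h (fun i j => F i j + G i j) = gsum M h F + gsum M h G.
Proof.
  unfold gsum; rewrite <- Rmult_plus_distr_l, <- plus_sum; f_equal.
  apply sum_eq; intros a _; rewrite <- plus_sum; reflexivity.
Qed.

Lemma gsum_scal c F : gsum M h (fun i j => c * F i j) = c * gsum M h F.
Proof.
  unfold gsum; rewrite <- Rmult_assoc, (Rmult_comm c), Rmult_assoc; f_equal.
  rewrite scal_sum; apply sum_eq; intros a _.
  rewrite Rmult_comm, scal_sum; apply sum_eq; intros; ring.
Qed.

Lemma gsum_minus F G : gsum M h (fun i j => F i j - G i j) = gsum M h F - gsum M h G.
Proof.
  rewrite (gsum_ext _ (fun i j => F i j + (-1) * G i j)) by (intros; ring).
  rewrite gsum_plus, gsum_scal; ring.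
Qed.

Lemma gsum_opp F : gsum M h (fun i j => - F i j) = - gsum M h F.
Proof. rewrite (gsum_ext _ (fun i j => (-1) * F i j)) by (intros; ring); rewrite gsum_scal; ring. Qed.

Lemma gsum_le F G : (forall i j, F i j <= G i j) -> gsum M h F <= gsum M h G.
Proof.
  intros E; unfold gsum; apply Rmult_le_compat_l; [apply pow2_ge_0|].
  apply sum_Rle; intros a _; apply sum_Rle; intros b _; apply E.
Qed.

Lemma gsum_const c : gsum M h (fun _ _ => c) = (h * INR M) ^ 2 * c.
Proof. unfold gsum; rewrite !sum_cte; replace (S (M - 1)) with M by lia; ring. Qed.

Lemma gsum_nonneg F : (forall i j, 0 <= F i j) -> 0 <= gsum M h F.
Proof.
  intros E; replace 0 with (gsum M h (fun _ _ => 0)) by (rewrite gsum_const; ring).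
  apply gsum_le, E.
Qed.

Lemma gperiodic_op2 (f : R -> R -> R) v w : gperiodic M v -> gperiodic M w ->
  gperiodic M (fun i j => f (v i j) (w i j)).
Proof.
  intros Pv Pw i j; destruct (Pv i j) as [-> ->], (Pw i j) as [-> ->]; split; reflexivity.
Qed.

(* Every difference operator used below is such a row/column stencil. *)
Lemma gperiodic_stencil (S : (Z -> R) -> (Z -> R) -> R -> R) v : gperiodic M v ->
  gperiodic M (fun i j => S (fun a => v (i + a)%Z j) (fun b => v i (j + b)%Z) (v i j)).
Proof.
  intros P i j; split; f_equal; try (apply functional_extensionality; intros c);
    try apply P.
  - now replace (i + Z.of_nat M + c)%Z with (i + c + Z.of_nat M)%Z by ring; apply P.
  - now replace (j + Z.of_nat M + c)%Z with (j + c + Z.of_nat M)%Z by ring; apply P.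
Qed.

Lemma gperiodic_Dcx v : gperiodic M v -> gperiodic M (Dcx h v).
Proof. exact (gperiodic_stencil (fun row _ _ => (row 1%Z - row (-1)%Z) / (2 * h)) v). Qed.

Lemma gperiodic_Dcy v : gperiodic M v -> gperiodic M (Dcy h v).
Proof. exact (gperiodic_stencil (fun _ col _ => (col 1%Z - col (-1)%Z) / (2 * h)) v). Qed.

Lemma gperiodic_Lap_h v : gperiodic M v -> gperiodic M (Lap_h h v).
Proof.
  exact (gperiodic_stencil (fun row col c =>
    ((row 1%Z - c) / h - (c - row (-1)%Z) / h) / h
    + ((col 1%Z - c) / h - (c - col (-1)%Z) / h) / h) v).
Qed.

Lemma gperiodic_shiftx v a : gperiodic M v -> gperiodic M (fun i j => v (i + a)%Z j).
Proof. exact (gperiodic_stencil (fun row _ _ => row a) v). Qed.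

Lemma gperiodic_shifty v b : gperiodic M v -> gperiodic M (fun i j => v i (j + b)%Z).
Proof. exact (gperiodic_stencil (fun _ col _ => col b) v). Qed.

Lemma sum_telescope_periodic (T : Z -> R) : (forall i, T (i + Z.of_nat M)%Z = T i) ->
  sum_f_R0 (fun a => T (Z.of_nat a + 1 + 1)%Z - T (Z.of_nat a + 1)%Z) (M - 1) = 0.
Proof.
  intros P.
  assert (Tel : forall n, sum_f_R0 (fun a => T (Z.of_nat a + 1 + 1)%Z - T (Z.of_nat a + 1)%Z) n
                          = T (Z.of_nat n + 1 + 1)%Z - T 1%Z).
  { induction n as [|n IH]; [reflexivity|].
    rewrite tech5, IH, Nat2Z.inj_succ; unfold Z.succ; ring. }
  rewrite Tel; replace (Z.of_nat (M - 1) + 1 + 1)%Z with (1 + Z.of_nat M)%Z by lia.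
  rewrite P; ring.
Qed.

Lemma gsum_eq_telescope_x A B k T : gperiodic M T ->
  (forall i j, A i j - B i j = k * (T (i + 1)%Z j - T i j)) -> gsum M h A = gsum M h B.
Proof.
  intros P E; apply Rminus_diag_uniq; rewrite <- gsum_minus, (gsum_ext _ _ E), gsum_scal.
  unfold gsum.
  rewrite (sum_eq _ (fun a => sum_f_R0 (fun b => T (Z.of_nat a + 1 + 1)%Z (Z.of_nat b + 1)%Z) (M - 1)
                            - sum_f_R0 (fun b => T (Z.of_nat a + 1)%Z (Z.of_nat b + 1)%Z) (M - 1)))
    by (intros; apply minus_sum).
  rewrite (sum_telescope_periodic (fun i => sum_f_R0 (fun b => T i (Z.of_nat b + 1)%Z) (M - 1)));
    [ring|].
  intros i; apply sum_eq; intros; apply P.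
Qed.

Lemma gsum_eq_telescope_y A B k T : gperiodic M T ->
  (forall i j, A i j - B i j = k * (T i (j + 1)%Z - T i j)) -> gsum M h A = gsum M h B.
Proof.
  intros P E; apply Rminus_diag_uniq; rewrite <- gsum_minus, (gsum_ext _ _ E), gsum_scal.
  unfold gsum.
  rewrite (sum_eq _ (fun _ => 0)); [rewrite sum_cte; ring|].
  intros a _; apply sum_telescope_periodic; intros; apply P.
Qed.

Hypothesis Hh : h <> 0.

Lemma gsum_d2x_sym g v : gperiodic M g -> gperiodic M v ->
  gsum M h (fun i j => d2x h g i j * v i j) = gsum M h (fun i j => g i j * d2x h v i j).
Proof.
  intros Pg Pv.
  apply (gsum_eq_telescope_x _ _ (/ h ^ 2)
           (fun i j => g i j * v (i - 1)%Z j - g (i - 1)%Z j * v i j)).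
  - apply (gperiodic_op2 Rminus); apply (gperiodic_op2 Rmult);
      try assumption; apply gperiodic_shiftx; assumption.
  - intros i j; rewrite !Z.add_simpl_r; unfold d2x; field; exact Hh.
Qed.

Lemma gsum_d2y_sym g v : gperiodic M g -> gperiodic M v ->
  gsum M h (fun i j => d2y h g i j * v i j) = gsum M h (fun i j => g i j * d2y h v i j).
Proof.
  intros Pg Pv.
  apply (gsum_eq_telescope_y _ _ (/ h ^ 2)
           (fun i j => g i j * v i (j - 1)%Z - g i (j - 1)%Z * v i j)).
  - apply (gperiodic_op2 Rminus); apply (gperiodic_op2 Rmult);
      try assumption; apply gperiodic_shifty; assumption.
  - intros i j; rewrite !Z.add_simpl_r; unfold d2y; field; exact Hh.
Qed.

Lemma gsum_Lap_h_sym g v : gperiodic M g -> gperiodic M v ->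
  gsum M h (fun i j => Lap_h h g i j * v i j) = gsum M h (fun i j => g i j * Lap_h h v i j).
Proof.
  intros Pg Pv; unfold Lap_h.
  rewrite (gsum_ext _ (fun i j => d2x h g i j * v i j + d2y h g i j * v i j)) by (intros; ring).
  rewrite (gsum_ext (fun i j => g i j * _) (fun i j => g i j * d2x h v i j + g i j * d2y h v i j))
    by (intros; ring).
  rewrite !gsum_plus, gsum_d2x_sym, gsum_d2y_sym by assumption; reflexivity.
Qed.

Lemma gsum_Dcx_antisym g v : gperiodic M g -> gperiodic M v ->
  gsum M h (fun i j => Dcx h g i j * v i j) = - gsum M h (fun i j => g i j * Dcx h v i j).
Proof.
  intros Pg Pv; rewrite <- gsum_opp.
  apply (gsum_eq_telescope_x _ _ (/ (2 * h))
           (fun i j => g i j * v (i - 1)%Z j + g (i - 1)%Z j * v i j)).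
  - apply (gperiodic_op2 Rplus); apply (gperiodic_op2 Rmult);
      try assumption; apply gperiodic_shiftx; assumption.
  - intros i j; rewrite !Z.add_simpl_r; unfold Dcx; field; exact Hh.
Qed.

Lemma gsum_Dcy_antisym g v : gperiodic M g -> gperiodic M v ->
  gsum M h (fun i j => Dcy h g i j * v i j) = - gsum M h (fun i j => g i j * Dcy h v i j).
Proof.
  intros Pg Pv; rewrite <- gsum_opp.
  apply (gsum_eq_telescope_y _ _ (/ (2 * h))
           (fun i j => g i j * v i (j - 1)%Z + g i (j - 1)%Z * v i j)).
  - apply (gperiodic_op2 Rplus); apply (gperiodic_op2 Rmult);
      try assumption; apply gperiodic_shifty; assumption.
  - intros i j; rewrite !Z.add_simpl_r; unfold Dcy; field; exact Hh.
Qed.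

Definition fdx (v : grid) : grid := fun i j => (v (i + 1)%Z j - v i j) / h.
Definition fdy (v : grid) : grid := fun i j => (v i (j + 1)%Z - v i j) / h.

Lemma gperiodic_fdx v : gperiodic M v -> gperiodic M (fdx v).
Proof. exact (gperiodic_stencil (fun row _ c => (row 1%Z - c) / h) v). Qed.

Lemma gperiodic_fdy v : gperiodic M v -> gperiodic M (fdy v).
Proof. exact (gperiodic_stencil (fun _ col c => (col 1%Z - c) / h) v). Qed.

Lemma gsum_mul_d2x v : gperiodic M v ->
  gsum M h (fun i j => v i j * d2x h v i j) = - gsum M h (fun i j => fdx v i j ^ 2).
Proof.
  intros P; rewrite <- gsum_opp.
  apply (gsum_eq_telescope_x _ _ (/ h) (fun i j => v i j * fdx v (i - 1)%Z j)).
  - apply (gperiodic_op2 Rmult); [assumption|].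
    apply gperiodic_shiftx; exact (gperiodic_fdx v P).
  - intros i j; rewrite !Z.add_simpl_r; unfold d2x, fdx; rewrite !Z.sub_add; field; exact Hh.
Qed.

Lemma gsum_mul_d2y v : gperiodic M v ->
  gsum M h (fun i j => v i j * d2y h v i j) = - gsum M h (fun i j => fdy v i j ^ 2).
Proof.
  intros P; rewrite <- gsum_opp.
  apply (gsum_eq_telescope_y _ _ (/ h) (fun i j => v i j * fdy v i (j - 1)%Z)).
  - apply (gperiodic_op2 Rmult); [assumption|].
    apply gperiodic_shifty; exact (gperiodic_fdy v P).
  - intros i j; rewrite !Z.add_simpl_r; unfold d2y, fdy; rewrite !Z.sub_add; field; exact Hh.
Qed.

(* The central difference is the mean of the two one-sided differences. *)
Lemma gsum_Dcx_sq_le v : gperiodic M v ->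
  gsum M h (fun i j => Dcx h v i j ^ 2) <= gsum M h (fun i j => fdx v i j ^ 2).
Proof.
  intros P.
  assert (Shift : gsum M h (fun i j => fdx v (i - 1)%Z j ^ 2) = gsum M h (fun i j => fdx v i j ^ 2)).
  { symmetry; apply (gsum_eq_telescope_x _ _ 1 (fun i j => fdx v (i - 1)%Z j ^ 2)).
    - apply (gperiodic_stencil (fun _ _ c => c ^ 2)), gperiodic_shiftx, gperiodic_fdx, P.
    - intros i j; rewrite Z.add_simpl_r; ring. }
  apply (Rle_trans _ (gsum M h (fun i j => (fdx v i j ^ 2 + fdx v (i - 1)%Z j ^ 2) / 2))).
  - apply gsum_le; intros i j.
    replace (Dcx h v i j) with ((fdx v i j + fdx v (i - 1)%Z j) / 2)
      by (unfold Dcx, fdx; rewrite Z.sub_add; field; exact Hh).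
    pose proof (pow2_ge_0 (fdx v i j - fdx v (i - 1)%Z j)); nra.
  - rewrite (gsum_ext _ (fun i j => / 2 * fdx v i j ^ 2 + / 2 * fdx v (i - 1)%Z j ^ 2))
      by (intros; field).
    rewrite gsum_plus, !gsum_scal, Shift; lra.
Qed.

Lemma gsum_Dcy_sq_le v : gperiodic M v ->
  gsum M h (fun i j => Dcy h v i j ^ 2) <= gsum M h (fun i j => fdy v i j ^ 2).
Proof.
  intros P.
  assert (Shift : gsum M h (fun i j => fdy v i (j - 1)%Z ^ 2) = gsum M h (fun i j => fdy v i j ^ 2)).
  { symmetry; apply (gsum_eq_telescope_y _ _ 1 (fun i j => fdy v i (j - 1)%Z ^ 2)).
    - apply (gperiodic_stencil (fun _ _ c => c ^ 2)), gperiodic_shifty, gperiodic_fdy, P.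
    - intros i j; rewrite Z.add_simpl_r; ring. }
  apply (Rle_trans _ (gsum M h (fun i j => (fdy v i j ^ 2 + fdy v i (j - 1)%Z ^ 2) / 2))).
  - apply gsum_le; intros i j.
    replace (Dcy h v i j) with ((fdy v i j + fdy v i (j - 1)%Z) / 2)
      by (unfold Dcy, fdy; rewrite Z.sub_add; field; exact Hh).
    pose proof (pow2_ge_0 (fdy v i j - fdy v i (j - 1)%Z)); nra.
  - rewrite (gsum_ext _ (fun i j => / 2 * fdy v i j ^ 2 + / 2 * fdy v i (j - 1)%Z ^ 2))
      by (intros; field).
    rewrite gsum_plus, !gsum_scal, Shift; lra.
Qed.

Lemma gsum_grad_sq_le v : gperiodic M v ->
  gsum M h (fun i j => Dcx h v i j ^ 2 + Dcy h v i j ^ 2)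
  <= - gsum M h (fun i j => v i j * Lap_h h v i j).
Proof.
  intros P; unfold Lap_h.
  rewrite (gsum_ext (fun i j => v i j * _) (fun i j => v i j * d2x h v i j + v i j * d2y h v i j))
    by (intros; ring).
  rewrite !gsum_plus, gsum_mul_d2x, gsum_mul_d2y by exact P.
  pose proof (gsum_Dcx_sq_le v P); pose proof (gsum_Dcy_sq_le v P); lra.
Qed.

(** * The discrete energy *)

(* With P = |p|^2, Q = |q|^2 and s = p.q the gap is (3 P^2 - 4 P s + Q^2) / 4, which is
   nonnegative by Cauchy-Schwarz and 16 P^3 Q <= (3 P^2 + Q^2)^2. *)
Lemma double_well_semiconvex p1 p2 q1 q2 :
  (p1 ^ 2 + p2 ^ 2 - 1) ^ 2 / 4 - (q1 ^ 2 + q2 ^ 2 - 1) ^ 2 / 4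
    - ((p1 - q1) ^ 2 + (p2 - q2) ^ 2) / 2
  <= (p1 ^ 2 + p2 ^ 2 - 1) * (p1 * (p1 - q1) + p2 * (p2 - q2)).
Proof.
  set (P := p1 ^ 2 + p2 ^ 2); set (Q := q1 ^ 2 + q2 ^ 2); set (s := p1 * q1 + p2 * q2).
  assert (HP : 0 <= P) by (unfold P; nra).
  assert (HQ : 0 <= Q) by (unfold Q; nra).
  assert (CS : s ^ 2 <= P * Q).
  { replace (P * Q) with (s ^ 2 + (p1 * q2 - p2 * q1) ^ 2) by (unfold s, P, Q; ring).
    pose proof (pow2_ge_0 (p1 * q2 - p2 * q1)); lra. }
  match goal with |- ?A <= ?B =>
    assert (E : B - A = (3 * P ^ 2 - 4 * P * s + Q ^ 2) / 4) by (unfold P, Q, s; field) end.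
  clearbody P Q s.
  assert (AMGM : 16 * P ^ 3 * Q <= (3 * P ^ 2 + Q ^ 2) ^ 2).
  { replace ((3 * P ^ 2 + Q ^ 2) ^ 2) with
      (16 * P ^ 3 * Q + (Q - P) ^ 2 * (Q ^ 2 + 2 * P * Q + 9 * P ^ 2)) by ring.
    assert (0 <= (Q - P) ^ 2 * (Q ^ 2 + 2 * P * Q + 9 * P ^ 2)); [|lra].
    apply Rmult_le_pos; [apply pow2_ge_0 | nra]. }
  assert (4 * P * s <= 3 * P ^ 2 + Q ^ 2); [|lra].
  destruct (Rle_or_lt s 0) as [Hs | Hs]; [nra|].
  assert (16 * P ^ 2 * s ^ 2 <= 16 * P ^ 3 * Q).
  { replace (16 * P ^ 3 * Q) with (16 * P ^ 2 * (P * Q)) by ring.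
    apply Rmult_le_compat_l; [nra | exact CS]. }
  apply Rsqr_incr_0_var; [unfold Rsqr | nra]; nra.
Qed.

Variable delta : R.

Definition energy_density (v : grid) : grid := fun i j =>
  delta / 2 * Lap_h h v i j ^ 2 + (Dcx h v i j ^ 2 + Dcy h v i j ^ 2 - 1) ^ 2 / 4.

Definition energy (v : grid) : R := gsum M h (energy_density v).

Definition dissipation (Dt w : grid) : grid := fun i j =>
  Dt i j * w i j + delta / 2 * Lap_h h w i j ^ 2 + w i j * Lap_h h w i j / 2.

Lemma scheme_tested_identity u w Dt : gperiodic M u -> gperiodic M w ->
  (forall i j, Dt i j + delta * Lap_h h (Lap_h h u) i j - divf_h h u i j = 0) ->
  gsum M h (fun i j => Dt i j * w i j)
  + gsum M h (fun i j => delta * (Lap_h h u i j * Lap_h h w i j)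
      + (Dcx h u i j ^ 2 + Dcy h u i j ^ 2 - 1)
        * (Dcx h u i j * Dcx h w i j + Dcy h u i j * Dcy h w i j)) = 0.
Proof.
  intros Pu Pw Eq.
  set (g1 := fun i j => (Dcx h u i j ^ 2 + Dcy h u i j ^ 2 - 1) * Dcx h u i j).
  set (g2 := fun i j => (Dcx h u i j ^ 2 + Dcy h u i j ^ 2 - 1) * Dcy h u i j).
  assert (Pg1 : gperiodic M g1)
    by (apply (gperiodic_op2 (fun p q => (p ^ 2 + q ^ 2 - 1) * p));
        [apply gperiodic_Dcx | apply gperiodic_Dcy]; exact Pu).
  assert (Pg2 : gperiodic M g2)
    by (apply (gperiodic_op2 (fun p q => (p ^ 2 + q ^ 2 - 1) * q));
        [apply gperiodic_Dcx | apply gperiodic_Dcy]; exact Pu).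
  assert (Tested : gsum M h (fun i j =>
            (Dt i j + delta * Lap_h h (Lap_h h u) i j - divf_h h u i j) * w i j) = 0)
    by (rewrite (gsum_ext _ (fun _ _ => 0)) by (intros; rewrite Eq; ring);
        rewrite gsum_const; ring).
  rewrite (gsum_ext _ (fun i j => Dt i j * w i j + delta * (Lap_h h (Lap_h h u) i j * w i j)
             - (Dcx h g1 i j * w i j + Dcy h g2 i j * w i j))) in Tested
    by (intros; unfold divf_h; cbv beta zeta; fold g1 g2; ring).
  rewrite gsum_minus, gsum_plus, gsum_scal, gsum_plus, gsum_Lap_h_sym,
    gsum_Dcx_antisym, gsum_Dcy_antisym in Tested by (auto using gperiodic_Lap_h).
  rewrite gsum_plus, gsum_scal,
    (gsum_ext (fun i j => _ * (_ + _)) (fun i j => g1 i j * Dcx h w i j + g2 i j * Dcy h w i j))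
    by (intros; unfold g1, g2; ring).
  rewrite gsum_plus; lra.
Qed.

Lemma energy_step u u' Dt : gperiodic M u -> gperiodic M u' ->
  (forall i j, Dt i j + delta * Lap_h h (Lap_h h u) i j - divf_h h u i j = 0) ->
  energy u - energy u' + gsum M h (dissipation Dt (fun i j => u i j - u' i j)) <= 0.
Proof.
  intros Pu Pu' Eq.
  set (w := fun i j => u i j - u' i j).
  assert (Pw : gperiodic M w) by exact (gperiodic_op2 Rminus u u' Pu Pu').
  assert (Lw : forall i j, Lap_h h w i j = Lap_h h u i j - Lap_h h u' i j)
    by (intros; unfold w, Lap_h, d2x, d2y; field; exact Hh).
  assert (Xw : forall i j, Dcx h w i j = Dcx h u i j - Dcx h u' i j)
    by (intros; unfold w, Dcx; field; exact Hh).
  assert (Yw : forall i j, Dcy h w i j = Dcy h u i j - Dcy h u' i j)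
    by (intros; unfold w, Dcy; field; exact Hh).
  assert (Lower : gsum M h (fun i j => energy_density u i j - energy_density u' i j
                     + delta / 2 * Lap_h h w i j ^ 2
                     - (Dcx h w i j ^ 2 + Dcy h w i j ^ 2) / 2)
         <= gsum M h (fun i j => delta * (Lap_h h u i j * Lap_h h w i j)
             + (Dcx h u i j ^ 2 + Dcy h u i j ^ 2 - 1)
               * (Dcx h u i j * Dcx h w i j + Dcy h u i j * Dcy h w i j))).
  { apply gsum_le; intros i j; unfold energy_density; rewrite Lw, Xw, Yw.
    pose proof (double_well_semiconvex (Dcx h u i j) (Dcy h u i j) (Dcx h u' i j) (Dcy h u' i j)).
    pose proof (pow2_ge_0 (Lap_h h u i j - Lap_h h u' i j)); nra. }
  pose proof (scheme_tested_identity u w Dt Pu Pw Eq) as Tested.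
  pose proof (gsum_grad_sq_le w Pw) as Green.
  unfold energy, dissipation.
  rewrite (gsum_ext (fun i j => _ + _ + _) (fun i j => Dt i j * w i j
             + (delta / 2 * Lap_h h w i j ^ 2 + / 2 * (w i j * Lap_h h w i j))))
    by (intros; field).
  rewrite (gsum_ext _ (fun i j => (energy_density u i j - energy_density u' i j
             + delta / 2 * Lap_h h w i j ^ 2) - / 2 * (Dcx h w i j ^ 2 + Dcy h w i j ^ 2)))
    in Lower by (intros; field).
  rewrite !gsum_plus, !gsum_scal.
  rewrite gsum_minus, gsum_plus, gsum_minus, !gsum_scal in Lower.
  lra.
Qed.

End Grid.

(** * Energy decay of the variable-step BDF2 scheme *)

Lemma pow32_nonneg z : 0 <= pow32 z.
Proof.
  unfold pow32; destruct (Rle_or_lt 0 z).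
  - apply Rmult_le_pos; [assumption | apply sqrt_pos].
  - rewrite sqrt_neg_0 by lra; lra.
Qed.

Definition bdf2_weight (r : R) : R := pow32 r / (2 * (1 + r)).

Lemma bdf2_weight_nonneg r : 0 <= r -> 0 <= bdf2_weight r.
Proof.
  intros Hr; unfold bdf2_weight, Rdiv; apply Rmult_le_pos;
    [apply pow32_nonneg | left; apply Rinv_0_lt_compat; lra].
Qed.

Lemma quadratic_form_nonneg a d w X : 0 < d -> 1 <= 8 * a * d ->
  0 <= a * w ^ 2 + w * X / 2 + d * X ^ 2 / 2.
Proof.
  intros Hd Ha.
  assert (E : 8 * d * (a * w ^ 2 + w * X / 2 + d * X ^ 2 / 2)
              = (2 * d * X + w) ^ 2 + (8 * a * d - 1) * w ^ 2) by field.
  assert (0 <= (8 * a * d - 1) * w ^ 2) by (apply Rmult_le_pos; [lra | apply pow2_ge_0]).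
  pose proof (pow2_ge_0 (2 * d * X + w)).
  apply (Rmult_le_reg_l (8 * d)); lra.
Qed.

Lemma bdf2_first_step_bound tau d s w X : 0 < tau -> 0 < d -> 0 <= s ->
  tau < 4 * d * R_L 0 s ->
  bdf2_weight s / tau * w ^ 2 <= 2 / tau * w * w + d / 2 * X ^ 2 + w * X / 2.
Proof.
  intros Ht Hd Hs HR.
  assert (Hws := bdf2_weight_nonneg s Hs).
  unfold R_L in HR; replace (pow32 0) with 0 in HR by (unfold pow32; ring).
  replace (pow32 s / (1 + s)) with (2 * bdf2_weight s) in HR
    by (unfold bdf2_weight; field; lra).
  set (a := (2 - bdf2_weight s) / tau).
  assert (Ha : 1 <= 8 * a * d).
  { unfold a; apply (Rmult_le_reg_r tau); [exact Ht|].
    replace (8 * ((2 - bdf2_weight s) / tau) * d * tau) with (8 * d * (2 - bdf2_weight s))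
      by (field; lra).
    replace ((2 + 4 * 0 - 0) / (1 + 0)) with 2 in HR by field; lra. }
  pose proof (quadratic_form_nonneg a d w X Hd Ha).
  assert (2 / tau * w * w + d / 2 * X ^ 2 + w * X / 2 - bdf2_weight s / tau * w ^ 2
          = a * w ^ 2 + w * X / 2 + d * X ^ 2 / 2) by (unfold a; field; lra).
  lra.
Qed.

(* The cross term r^2 w w' is split by the weighted AM-GM inequality
   r^2 w w' <= (r^(3/2) w^2 + r^(5/2) w'^2) / 2; what is left of the w^2 coefficient,
   minus the weight handed on to the next step, is R_L(r, s) / (2 tau). *)
Lemma bdf2_step_bound tau taup d s w w' X : 0 < tau -> 0 < taup -> 0 < d -> 0 <= s ->
  tau < 4 * d * R_L (tau / taup) s ->
  bdf2_weight s / tau * w ^ 2 - bdf2_weight (tau / taup) / taup * w' ^ 2 <=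
  ((1 + 2 * (tau / taup)) / (tau * (1 + tau / taup)) * w
   - (tau / taup) ^ 2 / (tau * (1 + tau / taup)) * w') * w
  + d / 2 * X ^ 2 + w * X / 2.
Proof.
  intros Ht Htp Hd Hs HR.
  set (r := tau / taup) in *.
  assert (Hr : 0 < r) by (unfold r; apply Rdiv_lt_0_compat; assumption).
  replace taup with (tau / r) by (unfold r; field; lra).
  set (q := sqrt r); assert (Hq : q * q = r) by (apply sqrt_sqrt; lra).
  assert (Hq0 : 0 <= q) by apply sqrt_pos.
  assert (Hws := bdf2_weight_nonneg s Hs).
  unfold R_L in HR; replace (pow32 s / (1 + s)) with (2 * bdf2_weight s) in HR
    by (unfold bdf2_weight; field; lra).
  unfold bdf2_weight at 2; replace (pow32 r) with (r * q) in * by reflexivity.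
  assert (AMGM : r ^ 2 * w * w' <= (r * q * w ^ 2 + r ^ 2 * q * w' ^ 2) / 2).
  { assert (0 <= r * q * (w - q * w') ^ 2)
      by (apply Rmult_le_pos; [apply Rmult_le_pos; lra | apply pow2_ge_0]).
    replace (r ^ 2) with (r * (q * q)) by (rewrite Hq; ring).
    replace (r * (q * q) * q) with (r * q * (q * q)) by ring; nra. }
  set (a := ((2 + 4 * r - r * q) / (1 + r) - 2 * bdf2_weight s) / (2 * tau)).
  assert (Ha : 1 <= 8 * a * d).
  { unfold a; apply (Rmult_le_reg_r tau); [exact Ht|].
    replace (8 * (((2 + 4 * r - r * q) / (1 + r) - 2 * bdf2_weight s) / (2 * tau)) * d * tau)
      with (4 * d * ((2 + 4 * r - r * q) / (1 + r) - 2 * bdf2_weight s)) by (field; lra).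
    lra. }
  pose proof (quadratic_form_nonneg a d w X Hd Ha).
  assert (E : ((1 + 2 * r) / (tau * (1 + r)) * w - r ^ 2 / (tau * (1 + r)) * w') * w
              + d / 2 * X ^ 2 + w * X / 2
              - (bdf2_weight s / tau * w ^ 2 - r * q / (2 * (1 + r)) / (tau / r) * w' ^ 2)
            = (a * w ^ 2 + w * X / 2 + d * X ^ 2 / 2)
              + ((r * q * w ^ 2 + r ^ 2 * q * w' ^ 2) / 2 - r ^ 2 * w * w') / (tau * (1 + r)))
    by (unfold a; field; lra).
  assert (0 <= ((r * q * w ^ 2 + r ^ 2 * q * w' ^ 2) / 2 - r ^ 2 * w * w') / (tau * (1 + r))).
  { unfold Rdiv; apply Rmult_le_pos; [lra|].
    left; apply Rinv_0_lt_compat, Rmult_lt_0_compat; lra. }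
  lra.
Qed.

Lemma ratio_nonneg tau N rN1 k : (forall n, (1 <= n <= N)%nat -> 0 < tau n) -> 0 < rN1 ->
  (k <= S N)%nat -> 0 <= ratio tau N rN1 k.
Proof.
  intros Ht Hr Hk; unfold ratio.
  destruct (Nat.leb k 1) eqn:E1; [lra|]; destruct (Nat.eqb k (S N)) eqn:E2; [lra|].
  apply Nat.leb_gt in E1; apply Nat.eqb_neq in E2.
  left; apply Rdiv_lt_0_compat; apply Ht; lia.
Qed.

Lemma ratio_interior tau N rN1 k : (2 <= k <= N)%nat -> ratio tau N rN1 k = tau k / tau (k - 1)%nat.
Proof.
  intros Hk; unfold ratio.
  destruct (Nat.leb k 1) eqn:E1; [apply Nat.leb_le in E1; lia|].
  destruct (Nat.eqb k (S N)) eqn:E2; [apply Nat.eqb_eq in E2; lia | reflexivity].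
Qed.

Section BDF2Energy.

Variables (M : nat) (h delta : R) (N : nat) (tau : nat -> R) (rN1 : R) (u : nat -> grid).
Hypothesis HM : (1 <= M)%nat.
Hypothesis Hh : h <> 0.
Hypothesis Hdelta : 0 < delta.
Hypothesis Htau : forall n, (1 <= n <= N)%nat -> 0 < tau n.
Hypothesis HrN1 : 0 < rN1.
Hypothesis Hstep : forall n, (1 <= n <= N)%nat ->
  tau n < 4 * delta * R_L (ratio tau N rN1 n) (ratio tau N rN1 (S n)).
Hypothesis Hper : forall n, (n <= N)%nat -> gperiodic M (u n).
Hypothesis Hscheme : forall n, (1 <= n <= N)%nat -> forall i j : Z,
  D2 tau u n i j + delta * Lap_h h (Lap_h h (u n)) i j - divf_h h (u n) i j = 0.

Definition increment_sq (n : nat) : R := gsum M h (fun i j => (u n i j - u (pred n) i j) ^ 2).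

Definition modified_energy (n : nat) : R :=
  energy M h delta (u n) + bdf2_weight (ratio tau N rN1 (S n)) / tau n * increment_sq n.

Lemma modified_energy_first : (1 <= N)%nat -> modified_energy 1 <= energy M h delta (u 0%nat).
Proof.
  intros HN.
  pose proof (energy_step M h HM Hh delta (u 1%nat) (u 0%nat) (D2 tau u 1)
                (Hper 1 HN) (Hper 0 (Nat.le_0_l _)) (Hscheme 1 (conj (le_n 1) HN))) as Step.
  assert (Low : bdf2_weight (ratio tau N rN1 2) / tau 1%nat * increment_sq 1
                <= gsum M h (dissipation h delta (D2 tau u 1)
                                (fun i j => u 1%nat i j - u 0%nat i j))).
  { unfold increment_sq; rewrite <- gsum_scal; apply gsum_le; intros i j.
    apply bdf2_first_step_bound; [apply Htau; lia | exact Hdelta |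
      apply ratio_nonneg; auto; lia | exact (Hstep 1 (conj (le_n 1) HN))]. }
  unfold modified_energy; lra.
Qed.

Lemma modified_energy_succ n : (1 <= n)%nat -> (S n <= N)%nat ->
  modified_energy (S n) <= modified_energy n.
Proof.
  intros Hn HnN.
  pose proof (energy_step M h HM Hh delta (u (S n)) (u n) (D2 tau u (S n))
                (Hper (S n) HnN) (Hper n ltac:(lia)) (Hscheme (S n) ltac:(lia))) as Step.
  assert (Hr : ratio tau N rN1 (S n) = tau (S n) / tau n)
    by (rewrite ratio_interior by lia; do 2 f_equal; lia).
  assert (Low : bdf2_weight (ratio tau N rN1 (S (S n))) / tau (S n) * increment_sq (S n)
                - bdf2_weight (ratio tau N rN1 (S n)) / tau n * increment_sq n
                <= gsum M h (dissipation h delta (D2 tau u (S n))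
                                (fun i j => u (S n) i j - u n i j))).
  { unfold increment_sq; rewrite <- !gsum_scal, <- gsum_minus; apply gsum_le; intros i j.
    destruct n as [|m]; [lia|]; rewrite Hr.
    apply bdf2_step_bound; [apply Htau; lia | apply Htau; lia | exact Hdelta |
      apply ratio_nonneg; auto; lia |].
    rewrite <- Hr; apply Hstep; lia. }
  unfold modified_energy; lra.
Qed.

Lemma energy_le_initial n : (1 <= n <= N)%nat -> energy M h delta (u n) <= energy M h delta (u 0%nat).
Proof.
  intros Hn.
  assert (Chain : modified_energy n <= energy M h delta (u 0%nat)).
  { induction n as [|n IH]; [lia|].
    destruct (Nat.eq_dec n 0) as [-> | Hn0]; [apply modified_energy_first; lia|].
    eapply Rle_trans; [apply modified_energy_succ | apply IH]; lia. }
  assert (0 <= bdf2_weight (ratio tau N rN1 (S n)) / tau n * increment_sq n).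
  { apply Rmult_le_pos; [unfold Rdiv; apply Rmult_le_pos | apply gsum_nonneg; auto].
    - apply bdf2_weight_nonneg, ratio_nonneg; auto; lia.
    - left; apply Rinv_0_lt_compat, Htau; lia.
    - intros; apply pow2_ge_0. }
  unfold modified_energy in Chain; lra.
Qed.

End BDF2Energy.

(** * Bounds on the initial energy and on the norms *)

Lemma Rabs_sub_scal_le a b c Ka Kb : 0 <= c -> Rabs a <= Ka -> Rabs b <= Kb ->
  Rabs (a - c * b) <= Ka + c * Kb.
Proof.
  intros Hc Ha Hb.
  eapply Rle_trans; [apply Rabs_triang|].
  rewrite Rabs_Ropp, Rabs_mult, (Rabs_pos_eq c) by exact Hc.
  pose proof (Rmult_le_compat_l c _ _ Hc Hb); lra.
Qed.

Lemma energy_density_le h delta v B i j : 0 <= delta ->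
  Rabs (Dcx h v i j) <= B -> Rabs (Dcy h v i j) <= B -> Rabs (Lap_h h v i j) <= B ->
  energy_density h delta v i j <= delta / 2 * B ^ 2 + (2 * B ^ 2 + 1) ^ 2 / 4.
Proof.
  intros Hd Hx Hy Hl; unfold energy_density.
  assert (Sq : forall a, Rabs a <= B -> a ^ 2 <= B ^ 2).
  { intros a Ha; rewrite <- (pow2_abs a); apply pow_incr; split; [apply Rabs_pos | exact Ha]. }
  pose proof (Sq _ Hx); pose proof (Sq _ Hy); pose proof (Sq _ Hl).
  pose proof (pow2_ge_0 (Dcx h v i j)); pose proof (pow2_ge_0 (Dcy h v i j)).
  assert (delta / 2 * Lap_h h v i j ^ 2 <= delta / 2 * B ^ 2)
    by (apply Rmult_le_compat_l; lra).
  assert ((Dcx h v i j ^ 2 + Dcy h v i j ^ 2 - 1) ^ 2 <= (2 * B ^ 2 + 1) ^ 2)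
    by (rewrite <- (pow2_abs (_ - 1)); apply pow_incr; split; [apply Rabs_pos|];
        unfold Rabs; destruct Rcase_abs; lra).
  lra.
Qed.

Lemma initial_energy_bounded L delta cmax phi0 phi1 : 0 < L -> 0 <= delta -> 0 <= cmax ->
  smooth2 phi0 -> periodic2 L phi0 -> smooth2 phi1 -> periodic2 L phi1 ->
  exists E0, forall (M : nat) c (v : grid), (1 <= M)%nat -> 0 <= c <= cmax ->
    (forall i j, v i j = sample (L / INR M) phi0 i j - c * sample (L / INR M) phi1 i j) ->
    energy M (L / INR M) delta v <= E0.
Proof.
  intros HL Hd Hc S0 P0 S1 P1.
  destruct (sample_differences_bounded L phi0 HL S0 P0) as [K0 [HK0 B0]].
  destruct (sample_differences_bounded L phi1 HL S1 P1) as [K1 [HK1 B1]].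
  set (B := K0 + cmax * K1).
  exists (L ^ 2 * (delta / 2 * B ^ 2 + (2 * B ^ 2 + 1) ^ 2 / 4)).
  intros M c v HM Hcc Hv.
  set (h := L / INR M) in *.
  assert (HMr : 0 < INR M) by (apply lt_0_INR; lia).
  assert (Hh : 0 < h) by (apply Rdiv_lt_0_compat; assumption).
  assert (HcB : K0 + c * K1 <= B)
    by (unfold B; pose proof (Rmult_le_compat_r K1 _ _ HK1 (proj2 Hcc)); lra).
  unfold energy; replace (L ^ 2) with ((h * INR M) ^ 2) by (unfold h; field; lra).
  rewrite <- gsum_const by exact HM; apply gsum_le; intros i j.
  destruct (B0 h i j Hh) as (X0 & Y0 & L0), (B1 h i j Hh) as (X1 & Y1 & L1).
  apply energy_density_le; [exact Hd | | |].
  - replace (Dcx h v i j) with (Dcx h (sample h phi0) i j - c * Dcx h (sample h phi1) i j)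
      by (unfold Dcx; rewrite !Hv; field; lra).
    pose proof (Rabs_sub_scal_le _ _ c _ _ (proj1 Hcc) X0 X1); lra.
  - replace (Dcy h v i j) with (Dcy h (sample h phi0) i j - c * Dcy h (sample h phi1) i j)
      by (unfold Dcy; rewrite !Hv; field; lra).
    pose proof (Rabs_sub_scal_le _ _ c _ _ (proj1 Hcc) Y0 Y1); lra.
  - replace (Lap_h h v i j) with (Lap_h h (sample h phi0) i j - c * Lap_h h (sample h phi1) i j)
      by (unfold Lap_h, d2x, d2y; rewrite !Hv; field; lra).
    pose proof (Rabs_sub_scal_le _ _ c _ _ (proj1 Hcc) L0 L1); lra.
Qed.

(* Pointwise, |p|^4 <= 8 W(p) + 2 and |p|^2 <= 4 W(p) + 3/2 for the double well W. *)
Lemma norms_bounded_by_energy M h delta v E : (1 <= M)%nat -> 0 < delta ->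
  energy M h delta v <= E ->
  Rmax (norm_grad M h v) (Rmax (norm4_grad M h v) (norm_lap M h v))
  <= sqrt ((8 * E + 3 * (h * INR M) ^ 2) / 2) + sqrt (sqrt (8 * E + 2 * (h * INR M) ^ 2))
     + sqrt (2 * E / delta).
Proof.
  intros HM Hd HE.
  assert (Affine : forall a b, gsum M h (fun i j => a * energy_density h delta v i j + b)
                               = a * energy M h delta v + b * (h * INR M) ^ 2).
  { intros a b; rewrite gsum_plus, gsum_scal, gsum_const by exact HM; unfold energy; ring. }
  assert (Pt : forall i j,
     delta / 2 * Lap_h h v i j ^ 2 <= energy_density h delta v i j /\
     (Dcx h v i j ^ 2 + Dcy h v i j ^ 2) ^ 2 <= 8 * energy_density h delta v i j + 2 /\
     Dcx h v i j ^ 2 + Dcy h v i j ^ 2 <= 4 * energy_density h delta v i j + 3 / 2).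
  { intros i j; unfold energy_density.
    set (p := Dcx h v i j ^ 2 + Dcy h v i j ^ 2); set (l := Lap_h h v i j).
    assert (0 <= delta / 2 * l ^ 2) by (apply Rmult_le_pos; [lra | apply pow2_ge_0]).
    pose proof (pow2_ge_0 (p - 1)); pose proof (pow2_ge_0 (p - 2)); split; [|split]; nra. }
  assert (Lap : gsum M h (fun i j => Lap_h h v i j ^ 2) <= 2 * E / delta).
  { apply (Rmult_le_reg_l (delta / 2)); [lra|].
    replace (delta / 2 * (2 * E / delta)) with E by (field; lra).
    rewrite <- gsum_scal; eapply Rle_trans; [apply gsum_le; intros; apply Pt | exact HE]. }
  assert (Grad4 : gsum M h (fun i j => (Dcx h v i j ^ 2 + Dcy h v i j ^ 2) ^ 2)
                  <= 8 * E + 2 * (h * INR M) ^ 2).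
  { eapply Rle_trans; [apply (gsum_le _ _ _ (fun i j => 8 * energy_density h delta v i j + 2));
      intros; apply Pt|]; rewrite Affine; lra. }
  assert (Grad : gsum M h (fun i j => Dcx h v i j ^ 2 + Dcy h v i j ^ 2)
                 <= (8 * E + 3 * (h * INR M) ^ 2) / 2).
  { eapply Rle_trans; [apply (gsum_le _ _ _ (fun i j => 4 * energy_density h delta v i j + 3 / 2));
      intros; apply Pt|]; rewrite Affine; lra. }
  apply sqrt_le_1_alt in Lap, Grad; do 2 apply sqrt_le_1_alt in Grad4.
  pose proof (sqrt_pos ((8 * E + 3 * (h * INR M) ^ 2) / 2)).
  pose proof (sqrt_pos (sqrt (8 * E + 2 * (h * INR M) ^ 2))).
  pose proof (sqrt_pos (2 * E / delta)).
  unfold norm_grad, norm4_grad, norm_lap.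
  apply Rmax_lub; [|apply Rmax_lub]; lra.
Qed.

Lemma first_step_factor_le r : 0 <= r -> (2 + r) / (1 + r) <= 2.
Proof. intros Hr; apply (Rmult_le_reg_r (1 + r)); [lra|]; field_simplify; lra. Qed.

Theorem lemma2p3 :
  forall (L delta rs : R) (phi0 : R -> R -> R),
    0 < L -> 0 < delta -> 0 < rs -> rs < 4.864 ->
    smooth2 phi0 -> periodic2 L phi0 ->
    exists C0 : R,
      forall (M N : nat) (tau : nat -> R) (rN1 : R) (u : nat -> grid),
        (1 <= M)%nat ->
        let h := L / INR M in
        (forall n, (1 <= n <= N)%nat -> 0 < tau n) ->
        0 < rN1 -> rN1 <= rs ->
        (forall k, (2 <= k <= N)%nat -> ratio tau N rN1 k <= rs) ->
        (forall n, (1 <= n <= N)%nat ->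
           tau n < 4 * delta *
             Rmin (R_L (ratio tau N rN1 n) (ratio tau N rN1 (S n)))
                  ((2 + ratio tau N rN1 2) / (1 + ratio tau N rN1 2))) ->
        (forall n, (n <= N)%nat -> gperiodic M (u n)) ->
        (forall i j : Z,
           u 0%nat i j = phi0 (IZR i * h) (IZR j * h)
                         - tau 1%nat / 2 * phi1 delta phi0 (IZR i * h) (IZR j * h)) ->
        (forall n, (1 <= n <= N)%nat -> forall i j : Z,
           D2 tau u n i j + delta * Lap_h h (Lap_h h (u n)) i j
           - divf_h h (u n) i j = 0) ->
        forall n, (1 <= n <= N)%nat ->
          Rmax (norm_grad M h (u n)) (Rmax (norm4_grad M h (u n)) (norm_lap M h (u n)))
          <= C0.
Proof.
  (* The bound on the ratios only makes the step condition satisfiable (rs < 4.864 is where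
     R_L(r, r) changes sign); the estimate itself does not use it. *)
  intros L delta rs phi0 HL Hd _ _ S0 P0.
  destruct (initial_energy_bounded L delta (4 * delta) phi0 (phi1 delta phi0) HL
              ltac:(lra) ltac:(lra) S0 P0 (smooth2_phi1 delta phi0 S0)
              (periodic2_phi1 L delta phi0 P0)) as [E0 HE0].
  exists (sqrt ((8 * E0 + 3 * L ^ 2) / 2) + sqrt (sqrt (8 * E0 + 2 * L ^ 2)) + sqrt (2 * E0 / delta)).
  intros M N tau rN1 u HM h Htau HrN1 _ _ Hstep Hper Hu0 Hscheme n Hn.
  assert (HMr : 0 < INR M) by (apply lt_0_INR; lia).
  assert (Hh : 0 < h) by (apply Rdiv_lt_0_compat; assumption).
  assert (HhM : h * INR M = L) by (unfold h; field; lra).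
  assert (Ht1 : 0 < tau 1%nat <= 8 * delta).
  { split; [apply Htau; lia|].
    pose proof (Hstep 1%nat ltac:(lia)) as H1.
    pose proof (first_step_factor_le (ratio tau N rN1 2) ltac:(apply ratio_nonneg; auto; lia)).
    pose proof (Rmin_r (R_L (ratio tau N rN1 1) (ratio tau N rN1 2))
                  ((2 + ratio tau N rN1 2) / (1 + ratio tau N rN1 2))).
    nra. }
  rewrite <- HhM; apply norms_bounded_by_energy; [exact HM | exact Hd |].
  apply (Rle_trans _ (energy M h delta (u 0%nat))).
  - apply (energy_le_initial M h delta N tau rN1 u); auto.
    + lra.
    + intros k Hk; eapply Rlt_le_trans; [apply Hstep, Hk|].
      apply Rmult_le_compat_l; [lra | apply Rmin_l].
  - apply (HE0 M (tau 1%nat / 2)); [exact HM | lra | exact Hu0].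
Qed.
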